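(* Let $f\in\mathcal{C}(1)$ and let $\mathcal{J}=\{I_1,\dots,I_\ell\}$ be finitely many disjoint intervals. Then: (i) $f^{\mathrm{sd},\mathcal{J}}$ is constant on each $I\in\mathcal{J}$; (ii) for all $x,y\in\mathbb{R}$, $f^{\mathrm{sd},\mathcal{J}}(x)\ge f(x)-\sum_{I\in\mathcal{J}}\Delta_I(f)$ and $(f^{\mathrm{sd},\mathcal{J}}(x)-f^{\mathrm{sd},\mathcal{J}}(y))_+\le(f(x)-f(y))_+$. As a consequence, $E(f^{\mathrm{sd},\mathcal{J}})\le E(f)$.
   Context: For $x\in\mathbb{R}$, $\mathbb{P}^{\rm BM}_x$ is the law of one-dimensional Brownian motion $(B_t)$ started at $x$, and $\tau_y:=\inf\{t\ge0:B_t=y\}$. $\mathcal{C}(1)$ is the set of functions $f:\mathbb{R}\to[0,\infty)$ that are non-increasing on $(-\infty,0]$, non-decreasing on $[0,\infty)$, with $\lim_{x\to0}f(x)=0$, $\sup_{\mathbb{R}}f\le1$ and $\lim_{x\to\infty}f(x)=1$; $E(f):=-\int_{\mathbb{R}}\log\mathbb{P}^{\rm BM}_x(\tau_y\ge f(y)-f(x)\ \forall y\in\mathbb{R})\,\mathrm{d}x$. The intervals $I_i$ have endpoints $a_i<b_i$ (possibly $\pm\infty$), open, closed or half-open. For an interval $I$ and a function $g$, $M_I(g):=\sup_{y\in I}g(y)$, $m_I(g):=\inf_{y\in I}g(y)$, $\Delta_I(g):=M_I(g)-m_I(g)$. Soft deformation: $f^{[0]}:=f$ and for $k=1,\dots,\ell$,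 with $m_k:=m_{I_k}(f^{[k-1]})$, $M_k:=M_{I_k}(f^{[k-1]})$, set $f^{[k]}(x):=m_k$ if $f^{[k-1]}(x)\in[m_k,M_k]$, $f^{[k]}(x):=f^{[k-1]}(x)$ if $f^{[k-1]}(x)<m_k$, and $f^{[k]}(x):=f^{[k-1]}(x)-\Delta_{I_k}(f^{[k-1]})$ if $f^{[k-1]}(x)>M_k$. Then $f^{\mathrm{sd},\mathcal{J}}:=f^{[\ell]}$. *)

From HB Require Import structures.
From mathcomp Require Import all_boot all_order all_algebra.
From mathcomp Require Import all_classical all_reals all_analysis.
Set Implicit Arguments. Unset Strict Implicit. Unset Printing Implicit Defensive.
Import Order.TTheory GRing.Theory Num.Theory.
Import numFieldNormedType.Exports.
Local Open Scope classical_set_scope.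
Local Open Scope ring_scope.

Section Defs.
Variable R : realType.

Definition inC1 (f : R -> R) : Prop :=
  [/\ (forall x, 0 <= f x),
      (forall x y, x <= y -> y <= 0 -> f y <= f x),
      (forall x y, 0 <= x -> x <= y -> f x <= f y),
      (f x @[x --> (0 : R)^'] --> (0 : R)) &
      ((forall x, f x <= 1) /\ (f x @[x --> +oo] --> (1 : R)))].

(* An interval with endpoints a < b: it contains two distinct points. *)
Definition itv_nondeg (I : interval R) : Prop :=
  exists x y, [/\ x \in I, y \in I & x < y].

Definition supI (I : interval R) (g : R -> R) : R := sup [set g y | y in [set` I]].
Definition infI (I : interval R) (g : R -> R) : R := inf [set g y | y in [set` I]].
Definition DeltaI (I : interval R) (g : R -> R) : R := supI I g - infI I g.

Definition sd_step (g : R -> R) (I : interval R) : R -> R :=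
  fun x => let m := infI I g in let M := supI I g in
    if g x < m then g x
    else if g x <= M then m
    else g x - DeltaI I g.

Definition soft_deform (f : R -> R) (J : seq (interval R)) : R -> R :=
  foldl sd_step f J.

Definition pos_part (t : R) : R := Num.max t 0.

Definition is_std_BM d (T : measurableType d) (P : probability T R)
    (W : R -> T -> R) : Prop :=
  [/\ (forall t, measurable_fun [set: T] (W t)),
      (forall w, W 0 w = 0),
      (forall w, {within `[0, +oo[, continuous (fun t => W t w)}),
      (forall s t, 0 <= s -> s < t -> forall A : set R, measurable A ->
         P [set w | A (W t w - W s w)] = normal_prob 0 (Num.sqrt (t - s)) A) &
      (forall (n : nat) (ts : 'I_n.+1 -> R), 0 <= ts ord0 ->
         (forall i : 'I_n, ts (widen_ord (leqnSn n) i) < ts (lift ord0 i)) ->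
         forall A : 'I_n -> set R, (forall i, measurable (A i)) ->
         P [set w | forall i : 'I_n,
                      A i (W (ts (lift ord0 i)) w - W (ts (widen_ord (leqnSn n) i)) w)]
         = (\prod_(i < n)
              P [set w | A i (W (ts (lift ord0 i)) w - W (ts (widen_ord (leqnSn n) i)) w)%R])%E)].

(* Hitting time tau_y of the Brownian motion B_t = x + W_t started at x
   (inf of the empty set is +oo). *)
Definition hit_time d (T : measurableType d) (W : R -> T -> R) (x y : R) (w : T)
  : \bar R := ereal_inf [set t%:E | t in [set t | 0 <= t /\ x + W t w = y]].

Definition bm_event_prob d (T : measurableType d) (P : probability T R)
    (W : R -> T -> R) (g : R -> R) (x : R) : \bar R :=
  P [set w | forall y, ((g y - g x)%:E <= hit_time W x y w)%E].

Definition energy d (T : measurableType d) (P : probability T R)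
    (W : R -> T -> R) (g : R -> R) : \bar R :=
  (\int[lebesgue_measure]_(x in [set: R]) (- lne (bm_event_prob P W g x)))%E.

End Defs.

(* One step of the deformation is g |-> squash m M \o g, where squash m M
   collapses [m, M] to m and shifts everything above M down by M - m.  This
   map lowers values by at most M - m and never increases a positive
   increment.  Hence a step makes g constant on its interval, lowers g by at
   most Delta_I(g), and shrinks all positive increments g x - g y; the latter
   property composes and forces every Delta_I to shrink, which gives (i) and
   (ii) by induction on J.
   Shrinking the increments of f enlarges, for every x, the Brownian event
   {tau_y >= f y - f x for all y}, so its probability grows and the energy
   decreases.  These events are measurable because paths are continuous and
   the sublevel sets of a quasiconvex function are intervals, which reduces
   them to countably many conditions at rational times and levels. *)

From HB Require Import structures.
From mathcomp Require Import all_boot all_order all_algebra.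
From mathcomp Require Import all_classical all_reals all_analysis.
From mathcomp Require Import lra measurable_realfun.
Set Implicit Arguments. Unset Strict Implicit. Unset Printing Implicit Defensive.
Import Order.TTheory GRing.Theory Num.Theory.
Import numFieldNormedType.Exports.
Local Open Scope classical_set_scope.
Local Open Scope ring_scope.

Section soft_deformation.
Variable R : realType.
Implicit Types (g u v : R -> R) (I : interval R) (a b m M x y : R).

Definition bounded_range g := has_ubound (range g) /\ has_lbound (range g).

Definition incr_dominated u v :=
  forall a b, pos_part (u a - u b) <= pos_part (v a - v b).

Definition quasiconvex g := forall a b x, a <= x <= b -> g x <= Num.max (g a) (g b).

Lemma pos_part_le a b : (pos_part a <= pos_part b) = (a <= pos_part b).
Proof. by rewrite {1}/pos_part ge_max [X in _ && X]le_max lexx orbT andbT. Qed.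

Lemma ler0_pos_part a : a <= 0 -> pos_part a = 0.
Proof. by move=> a0; apply/max_idPr. Qed.

Lemma ger0_pos_part a : 0 <= a -> pos_part a = a.
Proof. by move=> a0; apply/max_idPl. Qed.

Lemma le_pos_part a : a <= pos_part a.
Proof. by rewrite /pos_part le_max lexx. Qed.

Lemma pos_part_ge0 a : 0 <= pos_part a.
Proof. by rewrite /pos_part le_max lexx orbT. Qed.

Lemma incr_dominatedP u v :
  incr_dominated u v <-> forall a b, u a - u b <= pos_part (v a - v b).
Proof. by split=> uv a b; have := uv a b; rewrite pos_part_le. Qed.

Lemma incr_dominated_trans u v g :
  incr_dominated u v -> incr_dominated v g -> incr_dominated u g.
Proof. by move=> uv vg a b; apply: le_trans (uv a b) (vg a b). Qed.

Lemma incr_dominated_le u v a b : incr_dominated u v -> v a <= v b -> u a <= u b.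
Proof.
move=> uv vab; rewrite -subr_le0; apply: le_trans (le_pos_part _) _.
by have := uv a b; rewrite (@ler0_pos_part (v a - v b)) ?subr_le0.
Qed.

Lemma incr_dominated_eq u v a b : incr_dominated u v -> v a = v b -> u a = u b.
Proof.
move=> uv vab; apply/eqP; rewrite eq_le.
by rewrite !(incr_dominated_le uv) // vab.
Qed.

Lemma quasiconvex_incr_dominated u v :
  incr_dominated u v -> quasiconvex v -> quasiconvex u.
Proof.
move=> uv qv a b x /qv; rewrite !le_max => /orP[] /(incr_dominated_le uv) ->;
  by rewrite ?orbT.
Qed.

Lemma vshaped_quasiconvex g :
  (forall x y, x <= y -> y <= 0 -> g y <= g x) ->
  (forall x y, 0 <= x -> x <= y -> g x <= g y) -> quasiconvex g.
Proof.
move=> gl gr a b x /andP[ax xb]; rewrite le_max.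
have [x0|x0] := leP x 0; first by rewrite gl.
by rewrite (gr x b) ?orbT // ltW.
Qed.

Definition squash m M x := if x < m then x else if x <= M then m else x - (M - m).

Lemma sd_stepE g I x : sd_step g I x = squash (infI I g) (supI I g) (g x).
Proof. by []. Qed.

Section squash.
Variables m M : R.

Lemma squash_mid x : m <= x <= M -> squash m M x = m.
Proof. by rewrite /squash => /andP[mx ->]; rewrite ltNge mx. Qed.

Lemma squash_le x : m <= M -> squash m M x <= x.
Proof. by rewrite /squash; case: (ltP x m); case: (leP x M); lra. Qed.

Lemma squash_ge x : m <= M -> x - (M - m) <= squash m M x.
Proof. by rewrite /squash; case: (ltP x m); case: (leP x M); lra. Qed.

Lemma squash_subr_le x y : m <= M -> squash m M x - squash m M y <= pos_part (x - y).
Proof.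
have := le_pos_part (x - y); have := pos_part_ge0 (x - y).
rewrite /squash; case: (ltP x m); case: (leP x M); case: (ltP y m); case: (leP y M);
  lra.
Qed.

End squash.

Lemma image_itv0 g I : [set` I] = set0 -> [set g y | y in [set` I]] = set0.
Proof. by move=> ->; rewrite image_set0. Qed.

Section bounded_range.
Variable g : R -> R.
Hypothesis gb : bounded_range g.

Let image_ubound I : has_ubound [set g y | y in [set` I]].
Proof. by apply: subset_has_ubound gb.1 => _ [y _ <-]; exists y. Qed.

Let image_lbound I : has_lbound [set g y | y in [set` I]].
Proof. by apply: subset_has_lbound gb.2 => _ [y _ <-]; exists y. Qed.

Lemma le_supI I y : y \in I -> g y <= supI I g.
Proof. by move=> yI; apply: ub_le_sup => //; exists y. Qed.

Lemma infI_le I y : y \in I -> infI I g <= g y.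
Proof. by move=> yI; apply: ge_inf => //; exists y. Qed.

Lemma infI_le_supI I : infI I g <= supI I g.
Proof.
have [/(image_itv0 g) I0|/set0P[y yI]] := eqVneq [set` I] set0.
  by rewrite /infI /supI I0 inf0 sup0.
exact: le_trans (infI_le yI) (le_supI yI).
Qed.

End bounded_range.

Lemma DeltaI_incr_dominated u v I :
  bounded_range v -> incr_dominated u v -> DeltaI I u <= DeltaI I v.
Proof.
move=> vb /incr_dominatedP uv.
have [I0|/set0P[y0 y0I]] := eqVneq [set` I] set0.
  by rewrite /DeltaI /supI /infI !image_itv0 // inf0 sup0.
have uyz y z : y \in I -> z \in I -> u y <= u z + DeltaI I v.
  move=> yI zI; have vyz : pos_part (v y - v z) <= DeltaI I v.
    rewrite /pos_part ge_max /DeltaI subr_ge0 infI_le_supI // andbT.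
    by apply: lerB; [exact: le_supI | exact: infI_le].
  by have := uv y z; lra.
have supu z : z \in I -> supI I u <= u z + DeltaI I v.
  by move=> zI; apply: ge_sup => [|_ [y yI <-]]; [exists (u y0), y0 | exact: uyz].
have : supI I u - DeltaI I v <= infI I u.
  by apply: lb_le_inf => [|_ [z zI <-]]; [exists (u y0), y0 | have := supu z zI; lra].
by rewrite /DeltaI; lra.
Qed.

Section sd_step.
Variables (g : R -> R) (I : interval R).
Hypothesis gb : bounded_range g.

Lemma sd_step_le x : sd_step g I x <= g x.
Proof. exact/squash_le/infI_le_supI. Qed.

Lemma sd_step_ge x : g x - DeltaI I g <= sd_step g I x.
Proof. exact/squash_ge/infI_le_supI. Qed.

Lemma sd_step_bounded : bounded_range (sd_step g I).
Proof.
have [[c gc] [c' gc']] := gb; split.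
  by exists c => _ [x _ <-]; apply: le_trans (sd_step_le x) (gc _ (imageT g x)).
exists (c' - DeltaI I g) => _ [x _ <-]; apply: le_trans (sd_step_ge x).
by rewrite lerD2r; apply: gc'; exists x.
Qed.

Lemma sd_step_dominated : incr_dominated (sd_step g I) g.
Proof. by apply/incr_dominatedP => a b; apply/squash_subr_le/infI_le_supI. Qed.

Lemma sd_step_const x y : x \in I -> y \in I -> sd_step g I x = sd_step g I y.
Proof. by move=> xI yI; rewrite !sd_stepE !squash_mid // ?infI_le ?le_supI. Qed.

End sd_step.

Lemma soft_deform_cons g I J : soft_deform g (I :: J) = soft_deform (sd_step g I) J.
Proof. by []. Qed.

Lemma soft_deform_dominated g J : bounded_range g -> incr_dominated (soft_deform g J) g.
Proof.
elim: J g => [g _ a b|I J IH g gb]; first exact: lexx.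
exact: incr_dominated_trans (IH _ (sd_step_bounded I gb)) (sd_step_dominated I gb).
Qed.

Lemma soft_deform_ge g J x :
  bounded_range g -> g x - \sum_(I <- J) DeltaI I g <= soft_deform g J x.
Proof.
elim: J g => [|I J IH] g gb; first by rewrite big_nil subr0.
rewrite big_cons soft_deform_cons.
have := IH _ (sd_step_bounded I gb); have := sd_step_ge I gb x.
have : \sum_(K <- J) DeltaI K (sd_step g I) <= \sum_(K <- J) DeltaI K g.
  by apply: ler_sum => K _; apply/DeltaI_incr_dominated/sd_step_dominated.
lra.
Qed.

Lemma soft_deform_const g J I x y : bounded_range g ->
  I \in J -> x \in I -> y \in I -> soft_deform g J x = soft_deform g J y.
Proof.
elim: J g => [//|K J IH] g gb; rewrite inE => /predU1P[-> | IJ] xI yI.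
  apply: incr_dominated_eq (soft_deform_dominated _ (sd_step_bounded _ gb)) _.
  exact: sd_step_const.
exact: IH (sd_step_bounded _ gb) IJ xI yI.
Qed.

End soft_deformation.

Section countable_rat.
Variables (d : measure_display) (T : measurableType d).

Lemma bigcup_measurable_rat (P : set rat) (F : rat -> set T) :
  (forall r, P r -> measurable (F r)) -> measurable (\bigcup_(r in P) F r).
Proof.
move=> mF; rewrite bigcup_mkcond; apply: bigcupT_measurable_rat => r.
by case: ifPn => // /set_mem; exact: mF.
Qed.

Lemma bigcap_measurable_rat (P : set rat) (F : rat -> set T) :
  (forall r, P r -> measurable (F r)) -> measurable (\bigcap_(r in P) F r).
Proof.
move=> mF; rewrite -[X in measurable X]setCK setC_bigcap.
by apply/measurableC/bigcup_measurable_rat => r /mF/measurableC.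
Qed.

End countable_rat.

(* No measurability is needed: the integral is a difference of suprema over
   simple functions below the positive and negative parts. *)
Lemma le_integral_pointwise d (T : measurableType d) (R : realType)
    (mu : {measure set T -> \bar R}) (D : set T) (f1 f2 : T -> \bar R) :
  (forall x, D x -> (f1 x <= f2 x)%E) ->
  (\int[mu]_(x in D) f1 x <= \int[mu]_(x in D) f2 x)%E.
Proof.
move=> f12; have le_patch : {in setT, forall x, (f1 \_ D) x <= (f2 \_ D) x}%E.
  by move=> x _; rewrite !patchE; case: ifPn => // /set_mem /f12.
rewrite /integral; apply: leeB; apply: ereal_sup_le => _ [h hf <-]; exists h => // x.
  exact: le_trans (hf x) (funepos_le le_patch (in_setT x)).
exact: le_trans (hf x) (funeneg_le le_patch (in_setT x)).
Qed.

Section reals.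
Variable R : realType.
Implicit Types (L : set R) (f : R -> R) (s q e : R).

Lemma continuous_within_rat_approx f s q e : {within `[0, +oo[, continuous f} ->
  0 <= s <= q -> 0 < e ->
  exists r : rat, 0 <= (ratr r : R) <= q /\ `|f s - f (ratr r)| < e.
Proof.
move=> cf /andP[s0 sq] e0.
have s_in : `[0, +oo[%classic s by rewrite /= in_itv /= s0.
have := (subspace_continuousP _ _).1 cf s s_in => /cvgr_dist_lt/(_ e e0).
rewrite /within /= => /nbhs_ballP[del /= del0 fdel].
have [->|s_neq0] := eqVneq s 0.
  by exists 0%Q; rewrite rmorph0 lexx (le_trans s0 sq) subrr normr0.
have /rat_in_itvoo[r] : Num.max 0 (s - del) < s.
  by rewrite gt_max lt_neqAle eq_sym s_neq0 s0 /=; lra.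
rewrite in_itv /= gt_max => /andP[/andP[r0 r1] r2].
exists r; split; first by rewrite (ltW r0) /=; lra.
apply: fdel; last by rewrite /= in_itv /= (ltW r0).
by rewrite /ball /= ger0_norm; lra.
Qed.

Lemma down_unbounded L : ~ has_ubound L -> down L = setT.
Proof.
move=> Lub; apply/seteqP; split=> // x _; apply: contrapT => xL; apply: Lub.
exists x => y Ly; rewrite leNgt; apply/negP => xy.
by apply: xL; exists y; split => //; exact: ltW.
Qed.

Lemma down_sup_mem L : has_sup L -> L (sup L) -> down L = [set` `]-oo, sup L]].
Proof.
move=> Ls LsL; apply/seteqP; split => x /=; rewrite in_itv /=.
  by case=> y [Ly xy]; apply: le_trans xy (sup_upper_bound Ls Ly).
by move=> xs; exists (sup L).
Qed.

Lemma down_sup_nmem L : has_sup L -> ~ L (sup L) -> down L = [set` `]-oo, sup L[].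
Proof.
move=> Ls LsL; apply/seteqP; split => x /=; rewrite in_itv /=.
  case=> y [Ly xy]; apply: le_lt_trans xy _.
  by rewrite lt_neqAle sup_upper_bound // andbT; apply: contraPneq LsL => <-.
move=> xs; have [|y Ly sy] := @sup_adherent _ L (sup L - x) _ Ls.
  by rewrite subr_gt0.
by exists y; split => //; apply: ltW; lra.
Qed.

End reals.

Section path_events.
Variables (R : realType) (d : measure_display) (T : measurableType d).
Variable V : R -> T -> R.
Hypothesis mV : forall t, measurable_fun setT (V t).
Hypothesis cV : forall w, {within `[0, +oo[, continuous (V ^~ w)}.
Arguments cV : clear implicits.
Implicit Types (q c : R) (L : set R).

Definition path_stays q L : set T := [set w | forall s, 0 <= s <= q -> L (V s w)].

Lemma path_stays_neg q L : q < 0 -> path_stays q L = setT.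
Proof. by move=> q0; apply/seteqP; split=> // w _ s /andP[s0 sq]; exfalso; lra. Qed.

Lemma path_staysT q : path_stays q setT = setT.
Proof. by apply/seteqP; split. Qed.

Let measurable_preimage t (A : set R) : measurable A -> measurable [set w | A (V t w)].
Proof. by move=> mA; rewrite -[X in measurable X]setTI; exact: mV. Qed.

Lemma measurable_path_stays_le q c : measurable (path_stays q [set` `]-oo, c]]).
Proof.
(* A path exceeding c at some time exceeds it at a nearby rational time. *)
have -> : path_stays q [set` `]-oo, c]] =
    \bigcap_(r in [set r : rat | 0 <= (ratr r : R) <= q])
      [set w | [set` `]-oo, c]] (V (ratr r) w)].
  apply/seteqP; split => w /= wq; first by move=> r /= rq; apply: wq.
  move=> s sq; rewrite /= in_itv /= leNgt; apply/negP => cs.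
  have [|r [rq]] := continuous_within_rat_approx (e := V s w - c) (cV w) sq.
    by rewrite subr_gt0.
  by have := wq r rq; rewrite /= in_itv /= ltr_norml; lra.
apply: bigcap_measurable_rat => r _.
by apply: measurable_preimage; exact: measurable_itv.
Qed.

Lemma measurable_path_stays_lt q c :
  0 <= q -> measurable (path_stays q [set` `]-oo, c[]).
Proof.
(* The maximum of the path over [0, q] is attained, so it stays below c - r
   for some rational r > 0. *)
move=> q0; have -> : path_stays q [set` `]-oo, c[] =
    \bigcup_(r in [set r : rat | 0 < (ratr r : R)])
      path_stays q [set` `]-oo, c - ratr r]].
  apply/seteqP; split => w /= wq; last first.
    by case: wq => r /= r0 wq s /wq /=; rewrite !in_itv /=; lra.
  have cw : {within `[0, q], continuous (V ^~ w)}.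
    by apply: continuous_subspaceW (cV w) => t /=; rewrite !in_itv /= => /andP[->].
  have [m] := EVT_max q0 cw; rewrite in_itv /= => mq Vm.
  have /rat_in_itvoo[r] : 0 < c - V m w.
    by have := wq m mq; rewrite /= in_itv /= subr_gt0.
  rewrite in_itv /= => /andP[r0 rc]; exists r => // s sq.
  by have := Vm s; rewrite /= !in_itv /= sq => /(_ isT); lra.
by apply: bigcup_measurable_rat => r _; exact: measurable_path_stays_le.
Qed.

Lemma measurable_path_stays_down q L : 0 <= q -> L !=set0 ->
  measurable (path_stays q (down L)).
Proof.
move=> q0 L0; have [Lub|/down_unbounded->] := pselect (has_ubound L); last first.
  by rewrite path_staysT.
have Ls : has_sup L by [].
have [/(down_sup_mem Ls)->|/(down_sup_nmem Ls)->] := pselect (L (sup L)).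
  exact: measurable_path_stays_le.
exact: measurable_path_stays_lt.
Qed.

End path_events.

Lemma measurable_path_stays_interval (R : realType) (d : measure_display)
    (T : measurableType d) (V : R -> T -> R) q (L : set R) :
  (forall t, measurable_fun setT (V t)) ->
  (forall w, {within `[0, +oo[, continuous (V ^~ w)}) ->
  is_interval L -> measurable (path_stays V q L).
Proof.
move=> mV cV iL; have [q0|q0] := ltP q 0.
  by rewrite path_stays_neg.
have [L0|/set0P L0] := eqVneq L set0.
  rewrite (_ : path_stays V q L = set0) //.
  by apply/seteqP; split => // w /(_ 0); rewrite L0 lexx q0 => /(_ isT).
have nL0 : (-%R @` L) !=set0 by case: L0 => u Lu; exists (- u), u.
pose nV t w := - V t w.
(* An interval is the meet of its down-closure and of its up-closure; the
   latter is a down-closure for the reflected path. *)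
have -> : path_stays V q L =
    path_stays V q (down L) `&` path_stays nV q (down (-%R @` L)).
  apply/seteqP; split => w /=.
    move=> wq; split=> s sq; first exact/le_down/wq.
    by apply/le_down; exists (V s w) => //; apply: wq.
  move=> [wq wq'] s sq; have [u1 [Lu1 Vu1]] := wq s sq.
  have [_ [[u2 Lu2 <-] Vu2]] := wq' s sq.
  by apply: (iL u2 u1) => //; rewrite Vu1 andbT -lerN2.
apply: measurableI; first exact: measurable_path_stays_down.
apply: measurable_path_stays_down => //.
- by move=> t; apply: measurable_funN.
- by move=> w t; apply: continuousN; apply: cV.
Qed.

Section hitting.
Variables (R : realType) (d : measure_display) (T : measurableType d).
Variable W : R -> T -> R.
Implicit Types (g : R -> R) (x y : R) (w : T).

Definition hit_event g x : set T :=
  [set w | forall y, ((g y - g x)%:E <= hit_time W x y w)%E].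

Lemma hit_time_ge0 x y w : (0 <= hit_time W x y w)%E.
Proof. by apply: le_ereal_inf_tmp => _ [t [t0 _] <-]; rewrite lee_fin. Qed.

Lemma hit_eventP g x w :
  hit_event g x w <-> forall t, 0 <= t -> g (x + W t w) - g x <= t.
Proof.
split=> [gw t t0 | gw y].
  have : (hit_time W x (x + W t w) w <= t%:E)%E by apply: ereal_inf_lbound; exists t.
  by move/(le_trans (gw _)); rewrite lee_fin.
by apply: le_ereal_inf_tmp => _ [t [t0 <-] <-]; rewrite lee_fin; apply: gw.
Qed.

Lemma hit_eventE g x : hit_event g x =
  \bigcap_(r in setT) path_stays W (ratr r) [set v | g (x + v) <= g x + ratr r].
Proof.
apply/seteqP; split => w /=.
  by move/hit_eventP => gw r _ s /andP[s0 sr] /=; have := gw s s0; lra.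
move=> gw; apply/hit_eventP => t t0; rewrite leNgt; apply/negP => tg.
have /rat_in_itvoo[r] := tg; rewrite in_itv /= => /andP[tr rg].
by have := gw r Logic.I t; rewrite t0 (ltW tr) => /(_ isT) /=; lra.
Qed.

Hypothesis mW : forall t, measurable_fun setT (W t).
Hypothesis cW : forall w, {within `[0, +oo[, continuous (W ^~ w)}.

Lemma measurable_hit_event g x : quasiconvex g -> measurable (hit_event g x).
Proof.
move=> qg; rewrite hit_eventE; apply: bigcap_measurable_rat => r _.
apply: measurable_path_stays_interval => // a b ga gb z /andP[az zb] /=.
have := qg (x + a) (x + b) (x + z); rewrite !lerD2l az zb => /(_ isT).
by move/le_trans; apply; rewrite ge_max ga gb.
Qed.

Lemma hit_event_incr_dominated g1 g2 x :
  incr_dominated g2 g1 -> hit_event g1 x `<=` hit_event g2 x.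
Proof.
move=> /incr_dominatedP g21 w gw y.
apply: (@le_trans _ _ (pos_part (g1 y - g1 x))%:E); first by rewrite lee_fin.
have [g1y|g1y] := leP (g1 y - g1 x) 0.
  by rewrite ler0_pos_part //; exact: hit_time_ge0.
by rewrite ger0_pos_part ?(ltW g1y) //; exact: gw.
Qed.

Lemma energy_le_incr_dominated (P : probability T R) g1 g2 :
  quasiconvex g1 -> incr_dominated g2 g1 -> (energy P W g2 <= energy P W g1)%E.
Proof.
move=> qg1 g21; apply: le_integral_pointwise => x _.
rewrite leeN2 lee_lne ?in_itv /= ?measure_ge0 ?leey //.
apply: le_measure; rewrite ?inE; last exact: hit_event_incr_dominated.
  exact: measurable_hit_event.
exact/measurable_hit_event/(quasiconvex_incr_dominated g21).
Qed.

End hitting.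

Theorem lemma6p2 (R : realType) (f : R -> R) (J : seq (interval R)) :
  inC1 f ->
  (forall I, I \in J -> itv_nondeg I) ->
  (forall i j, (i < size J)%N -> (j < size J)%N -> i <> j ->
     forall x, ~ (x \in nth `]0, 0[ J i /\ x \in nth `]0, 0[ J j)) ->
  [/\ (* (i) *)
      (forall I, I \in J -> forall x y, x \in I -> y \in I ->
         soft_deform f J x = soft_deform f J y),
      (* (ii) *)
      (forall x, f x - \sum_(I <- J) DeltaI I f <= soft_deform f J x),
      (forall x y, pos_part (soft_deform f J x - soft_deform f J y)
                   <= pos_part (f x - f y)) &
      (* consequence: E(f^{sd,J}) <= E(f), for the law of Brownian motion,
         realized by any standard Brownian motion W on any probability space *)
      (forall (d : measure_display) (T : measurableType d)
              (P : probability T R) (W : R -> T -> R),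
         is_std_BM P W -> (energy P W (soft_deform f J) <= energy P W f)%E)].
Proof.
move=> [f0 fl fr _ [f1 _]] _ _.
have fb : bounded_range f by split; [exists 1 | exists 0] => _ [x _ <-].
have fsd := soft_deform_dominated J fb.
split => [I IJ x y xI yI | x | x y | d T P W [mW _ cW _ _]].
- exact: soft_deform_const fb IJ xI yI.
- exact: soft_deform_ge.
- exact: fsd.
- exact: energy_le_incr_dominated mW cW _ _ _ (vshaped_quasiconvex fl fr) fsd.
Qed.
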